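(* For $m\ge 1$, let $\mathbf{D}_m$ be the $m\times m$ symmetric tridiagonal matrix with diagonal entries $d_{kk}=4k^2-6k+\tfrac52$ ($1\le k\le m$), off-diagonal entries $d_{k,k+1}=d_{k+1,k}=-k(2k-1)$ ($1\le k\le m-1$), and all other entries zero. Then for every $m\in\mathbb{N}$ its smallest eigenvalue satisfies $$\lambda_{\min}(\mathbf{D}_m)<\frac{1}{\ln\big(m+\frac12\big)}.$$ *)

From HB Require Import structures.
From mathcomp Require Import all_boot all_order all_algebra.
From mathcomp Require Import all_classical all_reals all_analysis.
Set Implicit Arguments. Unset Strict Implicit. Unset Printing Implicit Defensive.
Import Order.TTheory GRing.Theory Num.Theory.
Local Open Scope ring_scope.

(* The m x m symmetric tridiagonal matrix D_m.  Row/column index i : 'I_m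
   corresponds to the 1-based index k = i+1.
   d_{kk} = 4k^2 - 6k + 5/2,  d_{k,k+1} = d_{k+1,k} = -k(2k-1). *)
Definition Dmat (R : realType) (m : nat) : 'M[R]_m :=
  \matrix_(i < m, j < m)
    if i == j :> nat then
      let k : R := (i.+1)%:R in 4 * k ^+ 2 - 6 * k + 5 / 2
    else if j == i.+1 :> nat then
      let k : R := (i.+1)%:R in - (k * (2 * k - 1))
    else if i == j.+1 :> nat then
      let k : R := (j.+1)%:R in - (k * (2 * k - 1))
    else 0.

Definition is_min_eigenvalue (R : realType) (m : nat) (A : 'M[R]_m) (l : R) :=
  eigenvalue A l /\ (forall mu : R, eigenvalue A mu -> l <= mu).

(* The smallest eigenvalue of a real symmetric matrix is the minimum of its
   Rayleigh quotient, attained on the compact unit sphere, so it suffices to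
   exhibit one vector with a small quotient.  Take v_i = c_i (m - i) with
   c_i = C(2i, i) / 4^i: the three-term structure of D_m and the recurrence
   c_(i+1) = c_i (2i+1)/(2i+2) give (v D_m)_j = c_j (2j + 1/2), so both
   v D_m v^T and v v^T are explicit in a = c_m^2 and A = sum_(j<m) c_j^2.
   The estimate A >= (m + 1/2) (ln (m + 1/2) + 2) a, proved by induction from
   ln (x + 1) <= ln x + 1/x, then bounds the quotient by 1 / ln (m + 1/2). *)

From HB Require Import structures.
From mathcomp Require Import all_boot all_order all_algebra.
From mathcomp Require Import all_classical all_reals all_analysis.
From mathcomp Require Import ring lra zify.
Import Order.TTheory GRing.Theory Num.Theory.
Import numFieldNormedType.Exports.
Local Open Scope ring_scope.

Lemma quad_ge0_lin_eq0 (R : realFieldType) (G H : R) :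
  (forall t : R, 0 <= 2 * t * G + t ^+ 2 * H) -> G = 0.
Proof.
move=> quad_ge0; set k := `|H| + 1.
have k_gt0 : 0 < k by rewrite ltr_wpDl.
have := quad_ge0 (- G / k).
have -> : 2 * (- G / k) * G + (- G / k) ^+ 2 * H = G ^+ 2 * (H - 2 * k) / k ^+ 2.
  by field; rewrite gt_eqF.
rewrite pmulr_lge0 ?invr_gt0 ?exprn_gt0 // => G2_ge0.
have G2_le0 : G ^+ 2 <= 0.
  have : 0 <= G ^+ 2 * (`|H| - H) by rewrite mulr_ge0 ?sqr_ge0 ?subr_ge0 ?ler_norm.
  have : 0 <= G ^+ 2 * `|H| by rewrite mulr_ge0 ?sqr_ge0.
  rewrite /k in G2_ge0; lra.
by apply/eqP; rewrite -sqrf_eq0 eq_le G2_le0 sqr_ge0.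
Qed.

Section QuadraticForm.
Local Open Scope classical_set_scope.
Context {R : realType} {n : nat}.
Implicit Types (A B : 'M[R]_n) (u v w : 'rV[R]_n).

Definition mxform A u v : R := (u *m A *m v^T) 0 0.

Lemma mxformDl A u v w : mxform A (u + v) w = mxform A u w + mxform A v w.
Proof. by rewrite /mxform !mulmxDl mxE. Qed.

Lemma mxformDr A u v w : mxform A u (v + w) = mxform A u v + mxform A u w.
Proof. by rewrite /mxform linearD mulmxDr mxE. Qed.

Lemma mxformZl A a u v : mxform A (a *: u) v = a * mxform A u v.
Proof. by rewrite /mxform -!scalemxAl !mxE. Qed.

Lemma mxformZr A a u v : mxform A u (a *: v) = a * mxform A u v.
Proof. by rewrite /mxform linearZ -scalemxAr !mxE. Qed.

Lemma mxform_sym A u v : A^T = A -> mxform A u v = mxform A v u.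
Proof.
move=> symA; rewrite /mxform -[in LHS](trmxK (u *m A *m v^T)) mxE.
by rewrite !trmx_mul trmxK symA mulmxA.
Qed.

Lemma mxform_subscalar A a u v : mxform (A - a%:M) u v = mxform A u v - a * mxform 1%:M u v.
Proof. by rewrite /mxform mulmxBr mulmxBl mul_mx_scalar -scalemxAl mulmx1 !mxE. Qed.

Lemma mxform1E u v : mxform 1%:M u v = \sum_i u 0 i * v 0 i.
Proof. by rewrite /mxform mulmx1 mxE; apply: eq_bigr => i _; rewrite mxE. Qed.

Lemma mxform1_ge0 u : 0 <= mxform 1%:M u u.
Proof. by rewrite mxform1E sumr_ge0 // => i _; rewrite -expr2 sqr_ge0. Qed.

Lemma mxform1_eq0 u : (mxform 1%:M u u == 0) = (u == 0).
Proof.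
apply/idP/eqP => [|->]; last by rewrite mxform1E big1 // => i _; rewrite mxE mul0r.
rewrite mxform1E psumr_eq0 => [/allP u0|i _]; last by rewrite -expr2 sqr_ge0.
apply/rowP => i; rewrite mxE; apply/eqP.
by rewrite -sqrf_eq0 expr2; apply: u0; rewrite mem_index_enum.
Qed.

Lemma mxform_continuous A : continuous (fun u => mxform A u u).
Proof.
have coord i : continuous (fun u : 'rV[R]_n => u 0 i) by exact: coord_continuous.
rewrite /mxform; under eq_fun do rewrite mxE.
apply: continuous_big => [|j _]; first exact: add_continuous.
under eq_fun do rewrite !mxE.
move=> u; apply: continuousM; last exact: coord.
apply: (continuous_big add_continuous) => i _ {}u.
by apply: continuousM; [exact: coord | exact: cst_continuous].
Qed.

Lemma mxform_eigen {A a u} v : u *m A = a *: u -> mxform A u v = a * mxform 1%:M u v.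
Proof. by move=> uA; rewrite /mxform uA mulmx1 -scalemxAl mxE. Qed.

Lemma psd_mxform_eq0 B c : B^T = B -> (forall u, 0 <= mxform B u u) ->
  mxform B c c = 0 -> c *m B = 0.
Proof.
move=> symB B_psd Bc0.
have cB_orth w : mxform B c w = 0.
  apply: (@quad_ge0_lin_eq0 _ _ (mxform B w w)) => t.
  suff -> : 2 * t * mxform B c w + t ^+ 2 * mxform B w w =
            mxform B (c + t *: w) (c + t *: w) by [].
  by rewrite !(mxformDl, mxformDr, mxformZl, mxformZr) Bc0 (mxform_sym _ w c symB); ring.
by apply/eqP; rewrite -mxform1_eq0 /mxform mulmx1; apply/eqP/cB_orth.
Qed.

Lemma unit_sphere_compact : compact [set u : 'rV[R]_n | mxform 1%:M u u = 1].
Proof.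
have sphere_closed : closed [set u : 'rV[R]_n | mxform 1%:M u u = 1].
  by have := (continuous_closedP _).1 (mxform_continuous 1%:M) _ (@closed_eq R 1).
apply: (subclosed_compact sphere_closed
  (@rV_compact R n (fun=> `[-1, 1]%classic) (fun=> @segment_compact R (-1) 1))).
move=> u /= u_unit i; rewrite in_itv /=.
have : u 0 i ^+ 2 <= 1.
  rewrite -u_unit mxform1E (bigD1 i) //= expr2 lerDl.
  by apply: sumr_ge0 => k _; rewrite -expr2 sqr_ge0.
by move=> ?; apply/andP; split; nra.
Qed.

Lemma sphere_min_rayleigh A c :
    (forall v, mxform 1%:M v v = 1 -> mxform A c c <= mxform A v v) ->
  forall u, mxform A c c * mxform 1%:M u u <= mxform A u u.
Proof.
move=> c_min u; have [->|u_neq0] := eqVneq u 0.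
  by rewrite /mxform !mul0mx !mxE mulr0.
have u_gt0 : 0 < mxform 1%:M u u by rewrite lt_def mxform1_eq0 u_neq0 mxform1_ge0.
set s := (Num.sqrt (mxform 1%:M u u))^-1.
have s_unit : s ^+ 2 * mxform 1%:M u u = 1.
  by rewrite exprVn sqr_sqrtr ?mxform1_ge0 // mulVf ?gt_eqF.
have := c_min (s *: u); rewrite !(mxformZl, mxformZr) !mulrA -!expr2 => /(_ s_unit) c_le.
apply: le_trans (ler_wpM2r (ltW u_gt0) c_le) _.
by rewrite mulrAC s_unit mul1r.
Qed.

Lemma symmetric_min_eigenvalue A : (0 < n)%N -> A^T = A ->
  exists l, is_min_eigenvalue A l /\ forall u, l * mxform 1%:M u u <= mxform A u u.
Proof.
move=> n_gt0 symA; set S := [set u : 'rV[R]_n | mxform 1%:M u u = 1].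
have S_neq0 : S !=set0.
  exists (delta_mx 0 (Ordinal n_gt0)); rewrite /S /= mxform1E (bigD1 (Ordinal n_gt0)) //=.
  rewrite big1 => [|i /negbTE i_neq]; rewrite !mxE ?eqxx ?i_neq ?andbF ?mulr0 //.
  by rewrite mulr1 addr0.
have [c /[!inE] c_unit c_min] :=
  EVT_min_rV S_neq0 unit_sphere_compact (continuous_subspaceT (mxform_continuous A)).
set l := mxform A c c.
have rayleigh u : l * mxform 1%:M u u <= mxform A u u.
  by apply: sphere_min_rayleigh => v v_unit; apply: c_min; rewrite inE.
have cA : c *m A = l *: c.
  apply/eqP; rewrite -subr_eq0 -mul_mx_scalar -mulmxBr; apply/eqP.
  apply: psd_mxform_eq0.
  - by rewrite linearB /= symA tr_scalar_mx.
  - by move=> u; rewrite mxform_subscalar subr_ge0.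
  - by rewrite mxform_subscalar c_unit mulr1 subrr.
exists l; split => //; split.
  by apply/eigenvalueP; exists c; rewrite // -mxform1_eq0 c_unit oner_neq0.
move=> mu /eigenvalueP [u uA u_neq0].
have u_gt0 : 0 < mxform 1%:M u u by rewrite lt_def mxform1_eq0 u_neq0 mxform1_ge0.
by rewrite -(ler_pM2r u_gt0) -(mxform_eigen u uA).
Qed.
End QuadraticForm.

Section Tridiagonal.
Context {R : pzRingType} {m : nat}.
Variables d e : nat -> R.

Definition tridiag : 'M[R]_m := \matrix_(i, j)
  if i == j :> nat then d i
  else if j == i.+1 :> nat then e i
  else if i == j.+1 :> nat then e j
  else 0.

Lemma tridiag_sym : tridiag^T = tridiag.
Proof.
apply/matrixP => i j; rewrite !mxE eq_sym.
case: eqVneq => [/val_inj -> //|_].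
by case: eqVneq => [->|_]; [rewrite ifN //; lia | case: eqVneq].
Qed.

Lemma tridiagE (i j : 'I_m) : tridiag i j =
  (if (i : nat) == j then d i else 0) + (if (j : nat) == i.+1 then e i else 0)
  + (if (i : nat) == j.+1 then e j else 0).
Proof.
rewrite mxE; case: eqVneq => [->|_]; first by rewrite !ifN ?addr0 //; lia.
case: eqVneq => [->|_]; first by rewrite ifN ?add0r ?addr0 //; lia.
by rewrite !add0r.
Qed.

Lemma sum_ord_eq (f : nat -> R) k :
  \sum_(i < m) (if (i : nat) == k then f i else 0) = if (k < m)%N then f k else 0.
Proof. by rewrite -big_mkcond big_ord1_eq. Qed.

(* [f m = 0] lets the term [f j.+1 * e j] stand also for the last column. *)
Lemma row_mul_tridiag (f : nat -> R) (j : 'I_m) : f m = 0 ->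
  ((\row_(i < m) f i) *m tridiag) 0 j =
  (if (j : nat) is k.+1 then f k * e k else 0) + f j * d j + f j.+1 * e j.
Proof.
move=> fm0; rewrite mxE.
under eq_bigr do rewrite mxE tridiagE !mulrDr !(fun_if (GRing.mul _)) !mulr0.
rewrite !big_split /= (sum_ord_eq (fun i => f i * d i)) ltn_ord.
rewrite (sum_ord_eq (fun i => f i * e j)).
have -> : (if (j.+1 < m)%N then f j.+1 * e j else 0) = f j.+1 * e j.
  case: ltnP => // jm; have -> : j.+1 = m by have := ltn_ord j; lia.
  by rewrite fm0 mul0r.
congr (_ + _); rewrite addrC; congr (_ + _).
case: j => [[|k] /= k_lt]; first by rewrite big1.
under eq_bigr do rewrite eqSS eq_sym.
by rewrite (sum_ord_eq (fun i => f i * e i)) ifT //; lia.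
Qed.
End Tridiagonal.

Section Wallis.
Context {R : realFieldType}.

(* [wallis k] = C(2k, k) / 4^k *)
Definition wallis (k : nat) : R := \prod_(i < k) ((2 * i%:R + 1) / (2 * i%:R + 2)).

Definition wallis_sqr_sum (n : nat) : R := \sum_(j < n) wallis j ^+ 2.

Lemma wallisS k : wallis k.+1 = wallis k * ((2 * k%:R + 1) / (2 * k%:R + 2)).
Proof. by rewrite /wallis big_ord_recr. Qed.

Lemma wallis_gt0 k : 0 < wallis k.
Proof.
apply: prodr_gt0 => i _; have := ler0n R i.
by move=> ?; rewrite divr_gt0 //; lra.
Qed.

Lemma wallis_sqr_sumS n : wallis_sqr_sum n.+1 = wallis_sqr_sum n + wallis n ^+ 2.
Proof. by rewrite /wallis_sqr_sum big_ord_recr. Qed.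

Lemma sum_wallis_sqr_lin (x : R) n :
  \sum_(j < n) wallis j ^+ 2 * (x - j%:R) * (2 * j%:R + 1/2) =
  (2 * x - n%:R + 3/4) * n%:R ^+ 2 * wallis n ^+ 2 + wallis_sqr_sum n / 16.
Proof.
elim: n => [|n IH]; first by rewrite big_ord0 /wallis_sqr_sum big_ord0; ring.
have n_ge0 : 0 <= n%:R :> R by rewrite ler0n.
rewrite big_ord_recr /= IH wallis_sqr_sumS wallisS mulrS.
by field; lra.
Qed.

Lemma sum_wallis_sqr_quad (x : R) n :
  \sum_(j < n) wallis j ^+ 2 * (x - j%:R) ^+ 2 =
  (x ^+ 2 + x / 2 + 1/32) * wallis_sqr_sum n
  - (2 * x - n%:R / 2 + 5/8) * n%:R ^+ 2 * wallis n ^+ 2.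
Proof.
elim: n => [|n IH]; first by rewrite big_ord0 /wallis_sqr_sum big_ord0; ring.
have n_ge0 : 0 <= n%:R :> R by rewrite ler0n.
rewrite big_ord_recr /= IH wallis_sqr_sumS wallisS mulrS.
by field; lra.
Qed.

End Wallis.

Section WallisLowerBound.
Context {R : realType}.

Lemma ln_succ_le (x : R) : 0 < x -> ln (x + 1) <= ln x + x^-1.
Proof.
move=> x_gt0; have -> : x + 1 = x * (1 + x^-1) by field; rewrite gt_eqF.
have x_inv_gt0 : 0 < x^-1 by rewrite invr_gt0.
by rewrite lnM ?posrE ?lerD2l ?le_ln1Dx //; lra.
Qed.

Lemma ln_step (x : R) : 1 <= x ->
  (x + 1) * (ln (x + 1) + 2) * x ^+ 2 <= (x * (ln x + 2) + 1) * (x + 1/2) ^+ 2.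
Proof.
move=> x_ge1; have x_gt0 : 0 < x by lra.
have ln_x_ge0 : 0 <= ln x by exact: ln_ge0.
have ln_succ : x * (ln (x + 1) + 2) <= x * (ln x + 2) + 1.
  have := ler_wpM2l (ltW x_gt0) (ln_succ_le _ x_gt0).
  by rewrite mulrDr mulfV ?gt_eqF //; lra.
have -> : (x + 1) * (ln (x + 1) + 2) * x ^+ 2 = (x + 1) * x * (x * (ln (x + 1) + 2)) by ring.
apply: le_trans (ler_wpM2l _ ln_succ) _; first by rewrite mulr_ge0 //; lra.
by rewrite mulrC ler_wpM2l //; nra.
Qed.

Lemma wallis_sqr_sum_ge n : (0 < n)%N ->
  (n%:R + 1/2) * (ln (n%:R + 1/2) + 2) * wallis n ^+ 2 <= wallis_sqr_sum n :> R.
Proof.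
elim: n => [//|[|n] IH _].
  rewrite wallis_sqr_sumS /wallis_sqr_sum big_ord0 wallisS /wallis big_ord0.
  have := @le_ln1Dx R (1/2) ltac:(lra).
  rewrite !mulr0 !add0r mul1r; lra.
have {IH} := IH isT.
set x : R := n.+1%:R + 1/2 => IH.
have -> : n.+2%:R + 1/2 = x + 1 :> R by rewrite /x mulrS; ring.
have x_ge1 : 1 <= x by have := ler0n R n; rewrite /x mulrS; lra.
have ratio : (2 * n.+1%:R + 1) / (2 * n.+1%:R + 2) = x / (x + 1/2) :> R.
  by rewrite /x; field; have := ler0n R n.+1; lra.
rewrite wallis_sqr_sumS wallisS ratio exprMn.
have a_gt0 : 0 < wallis n.+1 ^+ 2 :> R by rewrite exprn_gt0 ?wallis_gt0.
have : (x + 1) * (ln (x + 1) + 2) * (x / (x + 1/2)) ^+ 2 <= x * (ln x + 2) + 1.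
  by rewrite expr_div_n mulrA ler_pdivrMr ?ln_step // exprn_gt0 //; lra.
move/(ler_wpM2l (ltW a_gt0)); nra.
Qed.
End WallisLowerBound.

Lemma quotient_lt_inv (R : realFieldType) (x L a A l : R) :
  1 <= x -> 0 < L -> L <= x -> 0 < a -> (x + 1/2) * (L + 2) * a <= A ->
  l * ((x ^+ 2 + x / 2 + 1/32) * A - (3/2 * x + 5/8) * x ^+ 2 * a)
    <= (x + 3/4) * x ^+ 2 * a + A / 16 ->
  l < L^-1.
Proof.
move=> x_ge1 L_gt0 L_le_x a_gt0 A_ge.
set N := (x + 3/4) * x ^+ 2 * a + A / 16.
set T := (x ^+ 2 + x / 2 + 1/32) * A - _ => lT_le.
set c := x ^+ 2 + x / 2 + 1/32 - L / 16.
set K := (3/2 * x + 5/8) * x ^+ 2 + L * (x + 3/4) * x ^+ 2.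
have c_ge0 : 0 <= c by rewrite /c; nra.
have P_gt0 : 0 < c * ((x + 1/2) * (L + 2)) - K.
  have : 0 <= L * x * (x - L) by rewrite !mulr_ge0 //; lra.
  have : 0 <= L * (x - L) by rewrite mulr_ge0 //; lra.
  rewrite /c /K; nra.
have LN_lt_T : L * N < T.
  rewrite -subr_gt0.
  have -> : T - L * N =
      a * (c * ((x + 1/2) * (L + 2)) - K) + c * (A - (x + 1/2) * (L + 2) * a).
    by rewrite /N /T /c /K; ring.
  by rewrite (lt_le_trans (mulr_gt0 a_gt0 P_gt0)) // lerDl mulr_ge0 // subr_ge0.
have A_gt0 : 0 < A by rewrite (lt_le_trans _ A_ge) // !mulr_gt0 //; lra.
have N_gt0 : 0 < N by rewrite /N ltr_wpDl ?divr_gt0 // !mulr_ge0 ?ltW //; nra.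
have T_gt0 : 0 < T by rewrite (lt_trans _ LN_lt_T) // mulr_gt0.
have := ler_wpM2l (ltW L_gt0) lT_le.
rewrite -[L^-1]div1r ltr_pdivlMr //; nra.
Qed.

Section TestVector.
Context {R : realType}.

Definition test_coord m (i : nat) : R := wallis i * (m%:R - i%:R).

Definition test_vec m : 'rV[R]_m := \row_(i < m) test_coord m i.

Lemma Dmat_tridiag m : Dmat R m =
  tridiag (fun i => 4 * i.+1%:R ^+ 2 - 6 * i.+1%:R + 5/2)
            (fun i => - (i.+1%:R * (2 * i.+1%:R - 1))).
Proof. by []. Qed.

Lemma Dmat_sym m : (Dmat R m)^T = Dmat R m.
Proof. by rewrite Dmat_tridiag tridiag_sym. Qed.

Lemma test_vec_mul_Dmat m (j : 'I_m) :
  (test_vec m *m Dmat R m) 0 j = wallis j * (2 * j%:R + 1/2).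
Proof.
rewrite Dmat_tridiag row_mul_tridiag /test_coord ?subrr ?mulr0 //.
case: j => [[|k] /= _]; first by rewrite wallisS /wallis big_ord0; field.
have k_ge0 : 0 <= k%:R :> R by rewrite ler0n.
by rewrite !wallisS !mulrS; field; lra.
Qed.

Lemma mxform_Dmat_test_vec m :
  mxform (Dmat R m) (test_vec m) (test_vec m) =
  (m%:R + 3/4) * m%:R ^+ 2 * wallis m ^+ 2 + wallis_sqr_sum m / 16.
Proof.
rewrite /mxform mxE.
under eq_bigr do rewrite test_vec_mul_Dmat !mxE.
transitivity (\sum_(j < m) wallis j ^+ 2 * (m%:R - j%:R) * (2 * j%:R + 1/2) : R).
  by apply: eq_bigr => j _; rewrite /test_coord; ring.
by rewrite sum_wallis_sqr_lin; ring.
Qed.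

Lemma mxform1_test_vec m :
  mxform 1%:M (test_vec m) (test_vec m) =
  (m%:R ^+ 2 + m%:R / 2 + 1/32) * wallis_sqr_sum m
  - (3/2 * m%:R + 5/8) * m%:R ^+ 2 * wallis m ^+ 2.
Proof.
rewrite mxform1E.
transitivity (\sum_(j < m) wallis j ^+ 2 * (m%:R - j%:R) ^+ 2 : R).
  by apply: eq_bigr => j _; rewrite !mxE /test_coord; ring.
by rewrite sum_wallis_sqr_quad; field.
Qed.

End TestVector.

Theorem proposition4p5 (R : realType) (m : nat) (hm : (0 < m)%N) :
  exists l : R, is_min_eigenvalue (Dmat R m) l /\
    l < (ln (m%:R + 2^-1 : R))^-1.
Proof.
have [l [l_min rayleigh]] := symmetric_min_eigenvalue (Dmat R m) hm (Dmat_sym m).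
exists l; split => //.
have m_ge1 : 1 <= m%:R :> R by rewrite ler1n.
have ln_gt0 : 0 < ln (m%:R + 2^-1 : R) by rewrite ln_gt0 //; lra.
have ln_le : ln (m%:R + 2^-1 : R) <= m%:R.
  have -> : m%:R + 2^-1 = 1 + (m%:R - 2^-1) :> R by field.
  by rewrite (le_trans (le_ln1Dx _)) //; lra.
have := rayleigh (test_vec m); rewrite mxform_Dmat_test_vec mxform1_test_vec.
apply: quotient_lt_inv => //; first by rewrite exprn_gt0 ?wallis_gt0.
by have := wallis_sqr_sum_ge (R := R) m hm; rewrite [in ln _]div1r.
Qed.
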